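(* Let $X$ be a countably infinite set and $W=\{0,1\}^X$. There is no binary relation $\succeq$ on $W$ that is a preorder (reflexive and transitive) and simultaneously satisfies Strong Pareto, Permutation Invariance, and Completeness.
   Context: Elements of $W$ (''worlds'') are functions $w:X\to\mathbb R$ (here with values in $\{0,1\}$). For a preorder $\succeq$, write $w\succ v$ iff $w\succeq v$ and not $v\succeq w$. For a permutation $\pi$ of $X$ and $w\in W$, define $\pi(w)\in W$ by $\pi(w)(x)=w(\pi(x))$. Strong Pareto: for all $w,v\in W$, if $w(x)\ge v(x)$ for all $x\in X$ and $w(x)>v(x)$ for some $x\in X$, then $w\succ v$. Permutation Invariance: for all $w,v\in W$ and every permutation $\pi$ of $X$, $w\succeq v$ if and only if $\pi(w)\succeq\pi(v)$. Completeness: for all $w,v\in W$, $w\succeq v$ or $v\succeq w$. *)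

From Stdlib Require Import Arith.

Definition val (b : bool) : nat := if b then 1 else 0.

Definition world (X : Type) : Type := X -> bool.

Definition countably_infinite (X : Type) : Prop :=
  exists f : X -> nat, (forall x y, f x = f y -> x = y) /\ (forall n, exists x, f x = n).

Definition bijective {A : Type} (p : A -> A) : Prop :=
  (forall x y, p x = p y -> x = y) /\ (forall y, exists x, p x = y).

Definition permute {X : Type} (p : X -> X) (w : world X) : world X :=
  fun x => w (p x).

Definition preorder {A : Type} (R : A -> A -> Prop) : Prop :=
  (forall a, R a a) /\ (forall a b c, R a b -> R b c -> R a c).

Definition strict {A : Type} (R : A -> A -> Prop) (a b : A) : Prop :=
  R a b /\ ~ R b a.

Definition strong_pareto {X : Type} (R : world X -> world X -> Prop) : Prop :=
  forall w v : world X,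
    (forall x, val (v x) <= val (w x)) ->
    (exists x, val (v x) < val (w x)) ->
    strict R w v.

Definition permutation_invariance {X : Type} (R : world X -> world X -> Prop) : Prop :=
  forall (w v : world X) (p : X -> X), bijective p ->
    (R w v <-> R (permute p w) (permute p v)).

Definition completeness {A : Type} (R : A -> A -> Prop) : Prop :=
  forall a b, R a b \/ R b a.

(* Enumerate X by the naturals and split them into the evens [E] and the odds
   [O]. Exchanging each [2k] with [2k+1] swaps [E] and [O], so completeness and
   invariance force [E ~ O]. The involution fixing [1] and exchanging [2k] with
   [2k+3] maps [E] to [O \ {1}] and [O] to [E ∪ {1}], hence [O \ {1} >= E ∪ {1}].
   Strong Pareto gives [E ∪ {1} > E] and [O > O \ {1}], and the chain
   [O \ {1} >= E ∪ {1} > E >= O > O \ {1}] contradicts transitivity. *)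

From Stdlib Require Import Arith Lia Bool ClassicalEpsilon FunctionalExtensionality.

Definition involutive {A : Type} (s : A -> A) : Prop := forall a, s (s a) = a.

Lemma nat_parity_cases (n : nat) : (exists k, n = 2 * k) \/ (exists k, n = 2 * k + 1).
Proof. destruct (Nat.Even_or_Odd n) as [[k Hk]|[k Hk]]; eauto. Qed.

Definition flip_parity (n : nat) : nat := if Nat.even n then S n else pred n.

Lemma flip_parity_double (k : nat) : flip_parity (2 * k) = 2 * k + 1.
Proof. unfold flip_parity; rewrite Nat.even_even; lia. Qed.

Lemma flip_parity_double_succ (k : nat) : flip_parity (2 * k + 1) = 2 * k.
Proof. unfold flip_parity; rewrite Nat.even_odd; lia. Qed.

Lemma flip_parity_involutive : involutive flip_parity.
Proof.
  intro n; destruct (nat_parity_cases n) as [[k ->]|[k ->]].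
  - now rewrite flip_parity_double, flip_parity_double_succ.
  - now rewrite flip_parity_double_succ, flip_parity_double.
Qed.

Lemma even_flip_parity (n : nat) : Nat.even (flip_parity n) = Nat.odd n.
Proof.
  destruct (nat_parity_cases n) as [[k ->]|[k ->]].
  - now rewrite flip_parity_double, Nat.even_odd, Nat.odd_even.
  - now rewrite flip_parity_double_succ, Nat.even_even, Nat.odd_odd.
Qed.

Lemma odd_flip_parity (n : nat) : Nat.odd (flip_parity n) = Nat.even n.
Proof. unfold Nat.odd at 1; now rewrite even_flip_parity, Nat.negb_odd. Qed.

Definition shift_parity (n : nat) : nat :=
  if n =? 1 then 1 else if Nat.even n then n + 3 else n - 3.

Lemma shift_parity_one : shift_parity 1 = 1.
Proof. reflexivity. Qed.

Lemma shift_parity_double (k : nat) : shift_parity (2 * k) = 2 * (k + 1) + 1.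
Proof.
  unfold shift_parity; rewrite Nat.even_even.
  replace (2 * k =? 1) with false by (symmetry; apply Nat.eqb_neq; lia); lia.
Qed.

Lemma shift_parity_double_succ (k : nat) : shift_parity (2 * (k + 1) + 1) = 2 * k.
Proof.
  unfold shift_parity; rewrite Nat.even_odd.
  replace (2 * (k + 1) + 1 =? 1) with false by (symmetry; apply Nat.eqb_neq; lia); lia.
Qed.

Lemma nat_parity_cases_one (n : nat) :
  (exists k, n = 2 * k) \/ n = 1 \/ (exists k, n = 2 * (k + 1) + 1).
Proof.
  destruct (nat_parity_cases n) as [Hn|[[|k] ->]]; auto.
  right; right; exists k; lia.
Qed.

Lemma shift_parity_involutive : involutive shift_parity.
Proof.
  intro n; destruct (nat_parity_cases_one n) as [[k ->]|[->|[k ->]]].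
  - now rewrite shift_parity_double, shift_parity_double_succ.
  - reflexivity.
  - now rewrite shift_parity_double_succ, shift_parity_double.
Qed.

Lemma even_shift_parity (n : nat) :
  Nat.even (shift_parity n) = Nat.odd n && negb (n =? 1).
Proof.
  destruct (nat_parity_cases_one n) as [[k ->]|[->|[k ->]]].
  - rewrite shift_parity_double, Nat.even_odd, Nat.odd_even.
    replace (2 * k =? 1) with false by (symmetry; apply Nat.eqb_neq; lia); reflexivity.
  - reflexivity.
  - rewrite shift_parity_double_succ, Nat.even_even, Nat.odd_odd.
    replace (2 * (k + 1) + 1 =? 1) with false by (symmetry; apply Nat.eqb_neq; lia).
    reflexivity.
Qed.

Lemma odd_shift_parity (n : nat) :
  Nat.odd (shift_parity n) = Nat.even n || (n =? 1).
Proof.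
  unfold Nat.odd at 1; rewrite even_shift_parity; unfold Nat.odd.
  now destruct (Nat.even n), (n =? 1).
Qed.

Lemma countably_infinite_inverse (X : Type) :
  countably_infinite X ->
  exists (f : X -> nat) (g : nat -> X), (forall n, f (g n) = n) /\ (forall x, g (f x) = x).
Proof.
  intros [f [f_inj f_surj]].
  exists f, (fun n => proj1_sig (constructive_indefinite_description _ (f_surj n))).
  assert (fg : forall n, f (proj1_sig (constructive_indefinite_description _ (f_surj n))) = n)
    by (intro n; exact (proj2_sig (constructive_indefinite_description _ (f_surj n)))).
  split; [exact fg | intro x; apply f_inj; apply fg].
Qed.

Lemma val_le (b1 b2 : bool) : (b1 = true -> b2 = true) -> val b1 <= val b2.
Proof. destruct b1, b2; simpl; intuition; discriminate. Qed.

Section Transport.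

Context {X : Type}.
Variables (f : X -> nat) (g : nat -> X).
Hypotheses (fg : forall n, f (g n) = n) (gf : forall x, g (f x) = x).

Definition lift (P : nat -> bool) : world X := fun x => P (f x).

Definition conjugate (s : nat -> nat) : X -> X := fun x => g (s (f x)).

Lemma conjugate_bijective (s : nat -> nat) : involutive s -> bijective (conjugate s).
Proof.
  intro s_inv; unfold conjugate; split.
  - intros x y Hxy; apply (f_equal (fun z => s (f z))) in Hxy.
    rewrite !fg, !s_inv in Hxy; rewrite <- (gf x), <- (gf y), Hxy; reflexivity.
  - intro y; exists (g (s (f y))); now rewrite fg, s_inv, gf.
Qed.

Lemma permute_conjugate_lift (s : nat -> nat) (P Q : nat -> bool) :
  (forall n, P (s n) = Q n) -> permute (conjugate s) (lift P) = lift Q.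
Proof.
  intro PQ; apply functional_extensionality; intro x.
  unfold permute, conjugate, lift; now rewrite fg.
Qed.

Lemma strong_pareto_lift (R : world X -> world X -> Prop) (P Q : nat -> bool) (m : nat) :
  strong_pareto R -> (forall n, P n = true -> Q n = true) -> P m = false -> Q m = true ->
  strict R (lift Q) (lift P).
Proof.
  intros HP PQ Pm Qm; apply HP.
  - intro x; apply val_le, PQ.
  - exists (g m); unfold lift; rewrite fg, Pm, Qm; simpl; lia.
Qed.

End Transport.

Section Invariance.

Context {A : Type}.
Variable (R : world A -> world A -> Prop).
Hypothesis R_invariant : permutation_invariance R.

Lemma invariant_transport (p : A -> A) (w v w' v' : world A) :
  bijective p -> permute p w = w' -> permute p v = v' -> R w v -> R w' v'.
Proof. intros p_bij <- <-; apply R_invariant, p_bij. Qed.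

Lemma complete_invariant_swap (p : A -> A) (w v : world A) :
  completeness R -> bijective p -> permute p w = v -> permute p v = w -> R w v.
Proof.
  intros R_complete p_bij pw pv; destruct (R_complete w v) as [Rwv|Rvw]; [exact Rwv|].
  exact (invariant_transport p v w w v p_bij pv pw Rvw).
Qed.

End Invariance.

Theorem proposition1 (X : Type) (HX : countably_infinite X) :
  ~ exists R : world X -> world X -> Prop,
      preorder R /\ strong_pareto R /\ permutation_invariance R /\ completeness R.
Proof.
  intros [R [[_ R_trans] [R_pareto [R_invariant R_complete]]]].
  destruct (countably_infinite_inverse X HX) as [f [g [fg gf]]].
  set (evens := lift f Nat.even).
  set (odds := lift f Nat.odd).
  set (odds_but_one := lift f (fun n => Nat.odd n && negb (n =? 1))).
  set (evens_and_one := lift f (fun n => Nat.even n || (n =? 1))).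
  assert (R_evens_odds : R evens odds).
  { apply (complete_invariant_swap R R_invariant (conjugate f g flip_parity)); auto.
    - exact (conjugate_bijective f g fg gf _ flip_parity_involutive).
    - exact (permute_conjugate_lift f g fg _ _ _ even_flip_parity).
    - exact (permute_conjugate_lift f g fg _ _ _ odd_flip_parity). }
  assert (R_shifted : R odds_but_one evens_and_one).
  { apply (invariant_transport R R_invariant (conjugate f g shift_parity) evens odds); auto.
    - exact (conjugate_bijective f g fg gf _ shift_parity_involutive).
    - exact (permute_conjugate_lift f g fg _ _ _ even_shift_parity).
    - exact (permute_conjugate_lift f g fg _ _ _ odd_shift_parity). }
  assert (evens_and_one_gt : strict R evens_and_one evens).
  { apply (strong_pareto_lift f g fg R _ _ 1); auto.
    intros n ->; reflexivity. }
  assert (odds_gt : strict R odds odds_but_one).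
  { apply (strong_pareto_lift f g fg R _ _ 1); auto.
    intros n Hn; apply andb_true_iff in Hn; apply Hn. }
  apply (proj2 odds_gt).
  apply (R_trans _ evens_and_one); [exact R_shifted |].
  apply (R_trans _ evens); [exact (proj1 evens_and_one_gt) | exact R_evens_odds].
Qed.
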